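(* For $n\in\mathbb N$ let $A_n=\mathrm{diag}(n^{-1/2},n^{-1})$ (a $2\times 2$ matrix). There exists $n_0\in\mathbb N$ such that, for the index set $I=\{\lfloor i(\log i)^2\rfloor: i\ge n_0\}\subset\mathbb N$ and the matrices $(A_n)_{n\in I}$, the pressure satisfies $P(t)=\infty$ for all $0\le t<\frac32$ and $P(t)<0$ for all $t\ge\frac32$; in particular $P(t)\ne0$ for every $t\in[0,\infty)$.
   Context: For a countable index set $I$ and matrices $A_n$ ($n\in I$), for a word $\mathtt j=(j_1,\dots,j_k)$, $\alpha_1(\mathtt j)\ge\alpha_2(\mathtt j)$ are the singular values of $A_{j_1}\cdots A_{j_k}$, and with $d=2$ the singular value function is $\phi^t(\mathtt j)=\alpha_1(\mathtt j)^t$ for $0\le t<1$, $\phi^t(\mathtt j)=\alpha_1(\mathtt j)\alpha_2(\mathtt j)^{t-1}$ for $1\le t<2$, and $\phi^t(\mathtt j)=(\alpha_1(\mathtt j)\alpha_2(\mathtt j))^{t/2}$ for $t\ge2$. The pressure is $P(t)=\lim_{k\to\infty}\frac1k\log\sum_{\mathtt j\in I^k}\phi^t(\mathtt j)\in(-\infty,\infty]$. *)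

From Stdlib Require Import Reals Lra Lia ZArith List.
Import ListNotations.
Open Scope R_scope.

Record mat2 := Mat2 { m11 : R; m12 : R; m21 : R; m22 : R }.

Definition mmul (A B : mat2) : mat2 :=
  Mat2 (m11 A * m11 B + m12 A * m21 B) (m11 A * m12 B + m12 A * m22 B)
       (m21 A * m11 B + m22 A * m21 B) (m21 A * m12 B + m22 A * m22 B).

Definition mid : mat2 := Mat2 1 0 0 1.

(** Singular values of a 2x2 matrix: square roots of the eigenvalues of A^T A,
    which has trace = squared Frobenius norm and determinant = det(A)^2. *)
Definition fro2 (A : mat2) : R := m11 A ^ 2 + m12 A ^ 2 + m21 A ^ 2 + m22 A ^ 2.
Definition det2 (A : mat2) : R := m11 A * m22 A - m12 A * m21 A.
Definition sv1 (A : mat2) : R :=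
  sqrt ((fro2 A + sqrt (fro2 A ^ 2 - 4 * det2 A ^ 2)) / 2).
Definition sv2 (A : mat2) : R :=
  sqrt ((fro2 A - sqrt (fro2 A ^ 2 - 4 * det2 A ^ 2)) / 2).

Definition word_prod (A : nat -> mat2) (w : list nat) : mat2 :=
  fold_right (fun j M => mmul (A j) M) mid w.

(** Singular value function phi^t for d = 2 (t >= 0; for t < 0 the value is junk). *)
Definition sing_fun (t : R) (M : mat2) : R :=
  if Rlt_dec t 1 then Rpower (sv1 M) t
  else if Rlt_dec t 2 then sv1 M * Rpower (sv2 M) (t - 1)
  else Rpower (sv1 M * sv2 M) (t / 2).

Definition phi (A : nat -> mat2) (t : R) (w : list nat) : R :=
  sing_fun t (word_prod A w).

Definition word_in (I : nat -> Prop) (k : nat) (w : list nat) : Prop :=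
  length w = k /\ Forall I w.

(** Finite partial sums of sum_{j in I^k} phi^t(j) (over finite sets of distinct words). *)
Definition partial_sums (I : nat -> Prop) (A : nat -> mat2) (t : R) (k : nat) : R -> Prop :=
  fun s => exists l : list (list nat),
    NoDup l /\ Forall (word_in I k) l /\ s = fold_right Rplus 0 (map (phi A t) l).

Definition Zsum_finite I A t k (S : R) : Prop := is_lub (partial_sums I A t k) S.
Definition Zsum_infinite I A t k : Prop := ~ bound (partial_sums I A t k).

Definition pressure_is (I : nat -> Prop) (A : nat -> mat2) (t L : R) : Prop :=
  exists Z : nat -> R,
    (forall k, (1 <= k)%nat -> Zsum_finite I A t k (Z k)) /\
    Un_cv (fun k => ln (Z (S k)) / INR (S k)) L.

(** P(t) = +infinity: (1/k) log Z_k -> +infinity, with log(+infinity) = +infinity. *)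
Definition pressure_infinite (I : nat -> Prop) (A : nat -> mat2) (t : R) : Prop :=
  forall M : R, exists K : nat, forall k : nat, (K <= k)%nat -> (1 <= k)%nat ->
    Zsum_infinite I A t k \/
    exists Zk, Zsum_finite I A t k Zk /\ M <= ln Zk / INR k.

Definition A_diag (n : nat) : mat2 :=
  Mat2 (Rpower (INR n) (- (1/2))) 0 0 (/ INR n).

Definition index_set (n0 : nat) (m : nat) : Prop :=
  exists i : nat, (n0 <= i)%nat /\
    Z.of_nat m = Int_part (INR i * (ln (INR i)) ^ 2).

(* 1. A product A_{j1}...A_{jk} of letters j >= 1 is diag(N^(-1/2), N^(-1)) with
      N = j1...jk, so the singular value function is multiplicative:
      phi^t(w) = prod_i j_i^(-s(t)) with s(t) = t/2, t - 1/2, 3t/4 on [0,1), [1,2),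
      [2,oo); for t >= 0 we have s(t) >= 1 exactly when t >= 3/2.
   2. For a multiplicative weight h, the weights of the words of length k over a
      finite alphabet F add up to (sum_F h)^k.  Hence Z_k = S^k when the finite
      sums of h over I have supremum S, and Z_k = +oo when they are unbounded.
   3. With m(i) = floor(i (ln i)^2), the sums of m(i)^(-s) over i >= 11 stay below
      2 / ln 10 < 1 when s >= 1 (telescoping against 2 / ln(i-1)), and are unbounded
      when s < 1, because then m(i)^(-s) >= 1/i for large i.
   4. So P(t) = +oo for t < 3/2, and P(t) = ln S < 0 for t >= 3/2, with 0 < S < 1. *)

From Stdlib Require Import Reals Lra Lia ZArith List Classical.
Import ListNotations.
Open Scope R_scope.

Lemma ln_le_mono x y : 0 < x -> x <= y -> ln x <= ln y.
Proof.
  intros Hx Hxy; destruct (Req_dec x y) as [->|Hne]; [lra|].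
  left; apply ln_increasing; lra.
Qed.

Lemma exp_le_mono x y : x <= y -> exp x <= exp y.
Proof. intros Hxy; destruct (Req_dec x y) as [->|Hne]; [lra|]; left; apply exp_increasing; lra. Qed.

Lemma nat_above x : exists N : nat, x < INR N.
Proof. destruct (INR_archimed 1 x ltac:(lra)) as [N HN]; exists N; lra. Qed.

Lemma ln_le_sub1 x : 0 < x -> ln x <= x - 1.
Proof. intros Hx; pose proof (exp_ineq1_le (ln x)) as H; rewrite exp_ln in H; lra. Qed.

Lemma ln_increment_le x y : 0 < x -> 0 < y -> ln y - ln x <= (y - x) / x.
Proof.
  intros Hx Hy.
  pose proof (ln_le_sub1 (y / x) ltac:(apply Rdiv_lt_0_compat; lra)) as H.
  unfold Rdiv in H; rewrite ln_mult, ln_Rinv in H by (try apply Rinv_0_lt_compat; lra).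
  replace ((y - x) / x) with (y * / x - 1) by (field; lra); lra.
Qed.

Lemma ln_le_2sqrt x : 0 < x -> ln x <= 2 * sqrt x.
Proof.
  intros Hx.
  assert (Hu : 0 < sqrt x) by (apply sqrt_lt_R0; lra).
  rewrite <- (sqrt_sqrt x) at 1 by lra.
  rewrite ln_mult by lra; pose proof (ln_le_sub1 _ Hu); lra.
Qed.

(* Numerical bounds: ln x >= 1 from x >= 3 >= e, and ln 10 > 2 from e^2 < 9. *)
Lemma ln_ge_1 x : 3 <= x -> 1 <= ln x.
Proof.
  intros Hx; rewrite <- (ln_exp 1); apply ln_le_mono; [apply exp_pos|].
  pose proof exp_le_3; lra.
Qed.

Lemma ln_10_gt_2 : 2 < ln 10.
Proof.
  rewrite <- (ln_exp 2); apply ln_increasing; [apply exp_pos|].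
  replace 2 with (1 + 1) by ring; rewrite exp_plus.
  pose proof exp_le_3; pose proof (exp_pos 1); nra.
Qed.

Lemma Rpower_1_base z : Rpower 1 z = 1.
Proof. unfold Rpower; rewrite ln_1, Rmult_0_r; apply exp_0. Qed.

Lemma Rpower_neg_le_inv x s : 1 <= x -> 1 <= s -> Rpower x (- s) <= / x.
Proof.
  intros Hx Hs; rewrite <- (Rpower_1 x) at 2 by lra; rewrite <- Rpower_Ropp.
  apply Rle_Rpower; lra.
Qed.

Lemma is_lub_cofinal (A B : R -> Prop) S :
  (forall a, A a -> exists b, B b /\ a <= b) -> (forall b, B b -> A b) ->
  is_lub B S -> is_lub A S.
Proof.
  intros HAB HBA [Hub Hleast]; split.
  - intros a Ha; destruct (HAB a Ha) as [b [Hb Hab]]; specialize (Hub b Hb); lra.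
  - intros u Hu; apply Hleast; intros b Hb; apply Hu, HBA, Hb.
Qed.

Lemma is_lub_monotone_image (f : R -> R) (E : R -> Prop) S :
  (forall x, E x -> 0 <= x) -> (forall x y, 0 <= x <= y -> f x <= f y) ->
  continuity_pt f S -> is_lub E S ->
  is_lub (fun y => exists x, E x /\ y = f x) (f S).
Proof.
  intros Hnonneg Hmono Hcont [Hub Hleast]; split.
  - intros y [x [Hx ->]]; apply Hmono; split; [apply Hnonneg, Hx | apply Hub, Hx].
  - intros b Hb; destruct (Rle_lt_dec (f S) b) as [|Hlt]; [assumption|exfalso].
    destruct (Hcont (f S - b) ltac:(lra)) as [delta [Hdelta Hnear]].
    (* S - delta is not an upper bound of E, so some x in E is delta-close to S. *)
    assert (Hx : exists x, E x /\ S - delta < x).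
    { apply not_all_not_ex; intros Hnone.
      enough (S <= S - delta) by lra.
      apply Hleast; intros x Hx; destruct (Rle_lt_dec x (S - delta)); [assumption|].
      exfalso; apply (Hnone x); split; assumption. }
    destruct Hx as [x [Hx Hclose]].
    assert (Hfx : b < f x).
    { destruct (Req_dec S x) as [<-|Hne]; [lra|].
      specialize (Hub x Hx).
      assert (Hd : R_dist (f x) (f S) < f S - b).
      { apply Hnear; split; [split; [exact I | exact Hne]|].
        simpl; unfold R_dist; rewrite Rabs_left1; lra. }
      unfold R_dist in Hd; apply Rabs_def2 in Hd; lra. }
    specialize (Hb (f x) (ex_intro _ x (conj Hx eq_refl))); lra.
Qed.

Definition lsum (l : list R) : R := fold_right Rplus 0 l.

Lemma lsum_app l1 l2 : lsum (l1 ++ l2) = lsum l1 + lsum l2.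
Proof. induction l1 as [|x l1 IH]; simpl; [ring|]; unfold lsum in *; rewrite IH; ring. Qed.

Lemma lsum_map_scal {A} (f : A -> R) c l :
  lsum (map (fun x => c * f x) l) = c * lsum (map f l).
Proof. induction l as [|x l IH]; simpl; [ring|]; unfold lsum in *; rewrite IH; ring. Qed.

Lemma lsum_nonneg l : Forall (fun x => 0 <= x) l -> 0 <= lsum l.
Proof. induction 1; simpl; unfold lsum in *; lra. Qed.

Lemma lsum_le_pointwise {A} (f g : A -> R) l :
  (forall x, In x l -> f x <= g x) -> lsum (map f l) <= lsum (map g l).
Proof.
  induction l as [|x l IH]; intros Hle; simpl; unfold lsum in *; [lra|].
  pose proof (Hle x (or_introl eq_refl)).
  pose proof (IH (fun y Hy => Hle y (or_intror Hy))); lra.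
Qed.

Lemma lsum_incl {A} (f : A -> R) (l L : list A) :
  NoDup l -> incl l L -> (forall x, In x L -> 0 <= f x) ->
  lsum (map f l) <= lsum (map f L).
Proof.
  revert L; induction l as [|a l IH]; intros L Hnd Hincl Hpos; simpl.
  - apply lsum_nonneg, Forall_forall; intros y Hy.
    apply in_map_iff in Hy; destruct Hy as [x [<- Hx]]; auto.
  - inversion Hnd as [|? ? Ha Hl]; subst.
    destruct (in_split a L (Hincl a (or_introl eq_refl))) as [L1 [L2 ->]].
    assert (Hrest : lsum (map f l) <= lsum (map f (L1 ++ L2))).
    { apply IH; auto.
      - intros w Hw; pose proof (Hincl w (or_intror Hw)) as H.
        apply in_app_or in H; apply in_or_app; destruct H as [H|[<-|H]]; tauto.
      - intros w Hw; apply Hpos, in_or_app; apply in_app_or in Hw; simpl; tauto. }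
    rewrite map_app, lsum_app in *; simpl; unfold lsum in *; lra.
Qed.

Lemma lsum_telescope (U : nat -> R) a N :
  lsum (map (fun i => U i - U (S i)) (seq a N)) = U a - U (a + N)%nat.
Proof.
  revert a; induction N as [|N IH]; intros a; simpl; unfold lsum in *.
  - rewrite Nat.add_0_r; ring.
  - rewrite IH; replace (a + S N)%nat with (S a + N)%nat by lia; ring.
Qed.

(** * Words over a finite alphabet and multiplicative weights *)

Fixpoint words (F : list nat) (k : nat) : list (list nat) :=
  match k with
  | O => [[]]
  | S k => flat_map (fun x => map (cons x) (words F k)) F
  end.

Lemma in_words F k w : In w (words F k) <-> length w = k /\ incl w F.
Proof.
  revert w; induction k as [|k IH]; intros w; simpl.
  - split; [intros [<-|[]]; split; [reflexivity | intros ? []]|].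
    intros [H _]; destruct w; [auto | discriminate].
  - rewrite in_flat_map; split.
    + intros [x [Hx Hw]]; apply in_map_iff in Hw; destruct Hw as [w' [<- Hw']].
      apply IH in Hw'; destruct Hw' as [Hlen Hincl]; simpl; split; [congruence|].
      apply incl_cons; assumption.
    + intros [Hlen Hincl]; destruct w as [|x w]; [discriminate|].
      apply incl_cons_inv in Hincl; destruct Hincl as [Hx Hincl].
      exists x; split; [assumption|]; apply in_map, IH; simpl in Hlen; split; [lia|assumption].
Qed.

Lemma NoDup_words F k : NoDup F -> NoDup (words F k).
Proof.
  intros HF; induction k as [|k IH]; simpl; [repeat constructor; auto|].
  revert IH; generalize (words F k) as W; intros W HW.
  induction HF as [|x F Hx HF IHF]; simpl; [constructor|].
  apply NoDup_app; [| exact IHF |].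
  - apply NoDup_map_NoDup_ForallPairs; [|exact HW].
    intros a b _ _ E; inversion E; reflexivity.
  - intros w Hw Hw'; apply in_map_iff in Hw; destruct Hw as [v [<- _]].
    apply in_flat_map in Hw'; destruct Hw' as [y [Hy Hw']].
    apply in_map_iff in Hw'; destruct Hw' as [v' [E _]]; inversion E; subst; contradiction.
Qed.

Definition word_weight (h : nat -> R) (w : list nat) : R :=
  fold_right (fun j r => h j * r) 1 w.

Lemma word_weight_nonneg (h : nat -> R) w :
  (forall j, In j w -> 0 <= h j) -> 0 <= word_weight h w.
Proof.
  induction w as [|j w IH]; intros Hh; simpl; [lra|].
  apply Rmult_le_pos; [apply Hh; left; reflexivity | apply IH; intros; apply Hh; right; assumption].
Qed.

Lemma lsum_words (h : nat -> R) F k :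
  lsum (map (word_weight h) (words F k)) = lsum (map h F) ^ k.
Proof.
  induction k as [|k IH]; simpl; [unfold lsum; simpl; ring|].
  rewrite <- IH; clear IH; generalize (words F k) as W; intros W.
  induction F as [|x F IHF]; simpl; [unfold lsum; simpl; ring|].
  rewrite map_app, lsum_app, IHF, map_map; simpl.
  rewrite (lsum_map_scal (word_weight h) (h x) W); unfold lsum; simpl; ring.
Qed.

(** * Singular values of products of the diagonal matrices A_n *)

Definition diag (a b : R) : mat2 := Mat2 a 0 0 b.

Lemma mmul_diag a b c d : mmul (diag a b) (diag c d) = diag (a * c) (b * d).
Proof. unfold mmul, diag; simpl; f_equal; ring. Qed.

Lemma sv_diag a b : 0 < b <= a -> sv1 (diag a b) = a /\ sv2 (diag a b) = b.
Proof.
  intros Hab; unfold sv1, sv2, fro2, det2, diag; cbn [m11 m12 m21 m22].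
  replace ((a ^ 2 + 0 ^ 2 + 0 ^ 2 + b ^ 2) ^ 2 - 4 * (a * b - 0 * 0) ^ 2)
    with ((a ^ 2 - b ^ 2) ^ 2) by ring.
  rewrite sqrt_pow2 by nra; split.
  - replace ((a ^ 2 + 0 ^ 2 + 0 ^ 2 + b ^ 2 + (a ^ 2 - b ^ 2)) / 2) with (a ^ 2) by field.
    apply sqrt_pow2; lra.
  - replace ((a ^ 2 + 0 ^ 2 + 0 ^ 2 + b ^ 2 - (a ^ 2 - b ^ 2)) / 2) with (b ^ 2) by field.
    apply sqrt_pow2; lra.
Qed.

Definition letter_product (w : list nat) : R := word_weight INR w.

Lemma letter_product_ge_1 w : Forall (le 1) w -> 1 <= letter_product w.
Proof.
  induction 1 as [|j w Hj _ IH]; unfold letter_product in *; simpl; [lra|].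
  apply le_INR in Hj; simpl in Hj; nra.
Qed.

Lemma Rpower_letter_product w z :
  Forall (le 1) w -> Rpower (letter_product w) z = word_weight (fun j => Rpower (INR j) z) w.
Proof.
  induction 1 as [|j w Hj Hw IH]; unfold letter_product in *; simpl.
  - apply Rpower_1_base.
  - apply le_INR in Hj; simpl in Hj; pose proof (letter_product_ge_1 w Hw) as Hw1.
    unfold letter_product in Hw1; rewrite <- IH, Rpower_mult_distr; [reflexivity | lra | lra].
Qed.

Lemma word_prod_A_diag w :
  Forall (le 1) w ->
  word_prod A_diag w = diag (Rpower (letter_product w) (- (1/2))) (/ letter_product w).
Proof.
  induction 1 as [|j w Hj Hw IH]; unfold letter_product in *; simpl.
  - unfold mid, diag; rewrite Rpower_1_base; f_equal; lra.
  - apply le_INR in Hj; simpl in Hj; pose proof (letter_product_ge_1 w Hw) as Hw1.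
    unfold letter_product in Hw1; rewrite IH; unfold A_diag.
    fold (diag (Rpower (INR j) (- (1/2))) (/ INR j)).
    rewrite mmul_diag, Rpower_mult_distr, Rinv_mult by lra; reflexivity.
Qed.

(* The exponent s(t) with phi^t(diag(N^(-1/2), N^(-1))) = N^(-s(t)) for N >= 1. *)
Definition sv_exponent (t : R) : R :=
  if Rlt_dec t 1 then t / 2 else if Rlt_dec t 2 then t - 1/2 else 3 * t / 4.

Lemma sing_fun_diag t N :
  1 <= N -> sing_fun t (diag (Rpower N (- (1/2))) (/ N)) = Rpower N (- sv_exponent t).
Proof.
  intros HN.
  assert (Hinv : / N = Rpower N (-1)).
  { replace (-1) with (- (1)) by ring; rewrite Rpower_Ropp, Rpower_1; lra. }
  rewrite Hinv.
  assert (Hb : 0 < Rpower N (-1)) by apply exp_pos.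
  assert (Hab : Rpower N (-1) <= Rpower N (- (1/2))) by (apply Rle_Rpower; lra).
  destruct (sv_diag _ _ (conj Hb Hab)) as [E1 E2].
  unfold sing_fun, sv_exponent; rewrite E1, E2.
  destruct (Rlt_dec t 1); [|destruct (Rlt_dec t 2)].
  - rewrite Rpower_mult; f_equal; field.
  - rewrite Rpower_mult, <- Rpower_plus; f_equal; field.
  - rewrite <- Rpower_plus, Rpower_mult; f_equal; field.
Qed.

Lemma phi_A_diag t w :
  Forall (le 1) w -> phi A_diag t w = word_weight (fun j => Rpower (INR j) (- sv_exponent t)) w.
Proof.
  intros Hw; unfold phi; rewrite word_prod_A_diag by assumption.
  rewrite sing_fun_diag by (apply letter_product_ge_1; assumption).
  apply Rpower_letter_product; assumption.
Qed.

Lemma sv_exponent_lt_1 t : 0 <= t < 3/2 -> 0 <= sv_exponent t < 1.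
Proof. intros Ht; unfold sv_exponent; destruct (Rlt_dec t 1); [|destruct (Rlt_dec t 2)]; lra. Qed.

Lemma sv_exponent_ge_1 t : 3/2 <= t -> 1 <= sv_exponent t.
Proof. intros Ht; unfold sv_exponent; destruct (Rlt_dec t 1); [|destruct (Rlt_dec t 2)]; lra. Qed.

Definition finite_sums (I : nat -> Prop) (h : nat -> R) : R -> Prop :=
  fun x => exists F, NoDup F /\ Forall I F /\ x = lsum (map h F).

Section MultiplicativeWeights.

Variables (I : nat -> Prop) (A : nat -> mat2) (t : R) (h : nat -> R).
Hypothesis h_nonneg : forall j, I j -> 0 <= h j.
Hypothesis phi_multiplicative : forall w, Forall I w -> phi A t w = word_weight h w.

Lemma finite_sums_nonneg x : finite_sums I h x -> 0 <= x.
Proof.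
  intros [F [_ [HF ->]]]; apply lsum_nonneg, Forall_forall; intros y Hy.
  apply in_map_iff in Hy; destruct Hy as [j [<- Hj]]; apply h_nonneg.
  rewrite Forall_forall in HF; auto.
Qed.

Lemma lsum_phi_words l :
  Forall (fun w => Forall I w) l -> lsum (map (phi A t) l) = lsum (map (word_weight h) l).
Proof.
  intros Hl; f_equal; apply map_ext_in; intros w Hw; apply phi_multiplicative.
  rewrite Forall_forall in Hl; auto.
Qed.

Lemma partial_sum_alphabet F k :
  NoDup F -> Forall I F -> partial_sums I A t k (lsum (map h F) ^ k).
Proof.
  intros HnF HF; exists (words F k).
  assert (Hwords : Forall (word_in I k) (words F k)).
  { apply Forall_forall; intros w Hw; apply in_words in Hw; destruct Hw as [Hlen Hincl].
    split; [assumption|]; apply Forall_forall; intros j Hj.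
    rewrite Forall_forall in HF; apply HF, Hincl, Hj. }
  split; [apply NoDup_words, HnF|]; split; [exact Hwords|].
  rewrite lsum_phi_words, lsum_words; [reflexivity|].
  eapply Forall_impl; [|exact Hwords]; intros w [_ Hw]; exact Hw.
Qed.

(* ... and every partial sum is dominated by one of this form: take for F the
   letters that occur in the chosen words. *)
Lemma partial_sum_le_alphabet k x :
  partial_sums I A t k x -> exists F, NoDup F /\ Forall I F /\ x <= lsum (map h F) ^ k.
Proof.
  intros [l [Hnd [Hl ->]]].
  set (F := nodup Nat.eq_dec (concat l)).
  assert (HF : Forall I F).
  { apply Forall_forall; intros j Hj; apply nodup_In, in_concat in Hj.
    destruct Hj as [w [Hwl Hjw]]; rewrite Forall_forall in Hl.
    destruct (Hl w Hwl) as [_ Hw]; rewrite Forall_forall in Hw; auto. }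
  exists F; split; [apply NoDup_nodup|]; split; [exact HF|].
  rewrite lsum_phi_words by (eapply Forall_impl; [|exact Hl]; intros w [_ Hw]; exact Hw).
  rewrite <- lsum_words; apply lsum_incl; [exact Hnd| |].
  - intros w Hw; rewrite Forall_forall in Hl; destruct (Hl w Hw) as [Hlen _].
    apply in_words; split; [exact Hlen|].
    intros j Hj; apply nodup_In, in_concat; eauto.
  - intros w Hw; apply in_words in Hw; destruct Hw as [_ Hincl].
    apply word_weight_nonneg; intros j Hj; apply h_nonneg.
    rewrite Forall_forall in HF; apply HF, Hincl, Hj.
Qed.

Lemma Zsum_finite_of_lub S k : is_lub (finite_sums I h) S -> Zsum_finite I A t k (S ^ k).
Proof.
  intros Hlub.
  apply (is_lub_cofinal _ (fun y => exists x, finite_sums I h x /\ y = x ^ k)).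
  - intros x Hx; destruct (partial_sum_le_alphabet k x Hx) as [F [HnF [HF Hle]]].
    exists (lsum (map h F) ^ k); split; [|exact Hle].
    exists (lsum (map h F)); split; [exists F; auto | reflexivity].
  - intros y [x [[F [HnF [HF ->]]] ->]]; apply partial_sum_alphabet; assumption.
  - apply (is_lub_monotone_image (fun x => x ^ k)); [exact finite_sums_nonneg | | | exact Hlub].
    + intros x y Hxy; apply pow_incr; exact Hxy.
    + apply derivable_continuous_pt, derivable_pow.
Qed.

Lemma Zsum_infinite_of_unbounded k :
  ~ bound (finite_sums I h) -> (1 <= k)%nat -> Zsum_infinite I A t k.
Proof.
  intros Hunb Hk [b Hb]; apply Hunb; exists (Rmax b 1); intros x Hx.
  destruct (Rle_lt_dec x 1) as [|Hx1]; [pose proof (Rmax_r b 1); lra|].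
  destruct Hx as [F [HnF [HF ->]]].
  assert (Hpow : lsum (map h F) <= lsum (map h F) ^ k).
  { destruct k as [|k]; [lia|]; simpl; pose proof (pow_R1_Rle (lsum (map h F)) k ltac:(lra)); nra. }
  pose proof (Hb _ (partial_sum_alphabet F k HnF HF)); pose proof (Rmax_l b 1); lra.
Qed.

End MultiplicativeWeights.

(** * The sparse index set I = { floor(i (ln i)^2) : i >= n0 } *)

Definition index_real (i : nat) : R := INR i * ln (INR i) ^ 2.
Definition index_nat (i : nat) : nat := Z.to_nat (Int_part (index_real i)).

(* For i >= 3, index_real i >= i, so index_nat i is the integer part of a
   nonnegative real: index_real i - 1 < index_nat i <= index_real i, and i <= index_nat i. *)
Lemma index_real_ge i : (3 <= i)%nat -> INR i <= index_real i.
Proof.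
  intros Hi; apply le_INR in Hi; simpl in Hi.
  pose proof (ln_ge_1 (INR i) ltac:(lra)); unfold index_real.
  assert (1 <= ln (INR i) ^ 2) by nra; nra.
Qed.

Lemma index_nat_Z i : (3 <= i)%nat -> Z.of_nat (index_nat i) = Int_part (index_real i).
Proof.
  intros Hi; unfold index_nat; rewrite Z2Nat.id; [reflexivity|].
  pose proof (index_real_ge i Hi); pose proof (pos_INR i).
  destruct (base_Int_part (index_real i)) as [H1 H2].
  destruct (Z_lt_le_dec (Int_part (index_real i)) 0) as [Hneg|]; [exfalso|assumption].
  assert (Hle : (Int_part (index_real i) <= -1)%Z) by lia.
  apply IZR_le in Hle; lra.
Qed.

Lemma index_nat_bounds i :
  (3 <= i)%nat -> index_real i - 1 < INR (index_nat i) <= index_real i.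
Proof.
  intros Hi; rewrite INR_IZR_INZ, index_nat_Z by assumption.
  destruct (base_Int_part (index_real i)); lra.
Qed.

Lemma index_nat_ge i : (3 <= i)%nat -> (i <= index_nat i)%nat.
Proof.
  intros Hi; destruct (index_nat_bounds i Hi); pose proof (index_real_ge i Hi).
  assert (Hlt : INR i < INR (S (index_nat i))) by (rewrite S_INR; lra).
  apply INR_lt in Hlt; lia.
Qed.

(* Consecutive values of i (ln i)^2 are at least 1 apart, so i |-> index_nat i is
   strictly increasing. *)
Lemma index_real_gap i j : (3 <= i)%nat -> (i < j)%nat -> index_real i + 1 <= index_real j.
Proof.
  intros Hi Hij; unfold index_real.
  assert (Hij' : INR i + 1 <= INR j) by (rewrite <- S_INR; apply le_INR; lia).
  apply le_INR in Hi; simpl in Hi.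
  pose proof (ln_ge_1 (INR i) ltac:(lra)).
  assert (ln (INR i) <= ln (INR j)) by (apply ln_le_mono; lra).
  assert (ln (INR i) ^ 2 <= ln (INR j) ^ 2) by (apply pow_incr; lra).
  nra.
Qed.

Lemma index_nat_lt i j : (3 <= i)%nat -> (i < j)%nat -> (index_nat i < index_nat j)%nat.
Proof.
  intros Hi Hij; apply INR_lt; pose proof (index_real_gap i j Hi Hij).
  destruct (index_nat_bounds i Hi); destruct (index_nat_bounds j ltac:(lia)); lra.
Qed.

Lemma index_set_iff n0 m :
  (3 <= n0)%nat -> index_set n0 m <-> exists i, (n0 <= i)%nat /\ m = index_nat i.
Proof.
  intros Hn0; split.
  - intros [i [Hi Hm]]; exists i; split; [assumption|].
    unfold index_nat, index_real; rewrite <- Hm, Nat2Z.id; reflexivity.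
  - intros [i [Hi ->]]; exists i; split; [assumption|]; apply index_nat_Z; lia.
Qed.

Definition alphabet (a N : nat) : list nat := map index_nat (seq a N).

Lemma NoDup_alphabet a N : (3 <= a)%nat -> NoDup (alphabet a N).
Proof.
  unfold alphabet; revert a; induction N as [|N IH]; intros a Ha; simpl; constructor.
  - intros Hin; apply in_map_iff in Hin; destruct Hin as [j [E Hj]]; apply in_seq in Hj.
    pose proof (index_nat_lt a j Ha ltac:(lia)); lia.
  - apply IH; lia.
Qed.

Lemma alphabet_in_index_set n0 a N :
  (3 <= n0)%nat -> (n0 <= a)%nat -> Forall (index_set n0) (alphabet a N).
Proof.
  intros Hn0 Ha; apply Forall_forall; intros j Hj; apply in_map_iff in Hj.
  destruct Hj as [i [<- Hi]]; apply in_seq in Hi; apply index_set_iff; [assumption|].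
  exists i; split; [lia | reflexivity].
Qed.

Lemma index_set_letters_pos n0 w :
  (3 <= n0)%nat -> Forall (index_set n0) w -> Forall (le 1) w.
Proof.
  intros Hn0; apply Forall_impl; intros j Hj; apply index_set_iff in Hj; [|assumption].
  destruct Hj as [i [Hi ->]]; pose proof (index_nat_ge i ltac:(lia)); lia.
Qed.

(** * The series sum_i index_nat(i)^(-s) *)

Definition power_weight (s : R) (j : nat) : R := Rpower (INR j) (- s).

Lemma power_weight_pos s j : 0 < power_weight s j.
Proof. apply exp_pos. Qed.

Lemma inv_xlog2_le_telescope y :
  11 <= y -> 2 / (y * ln y ^ 2) <= 2 / ln (y - 1) - 2 / ln y.
Proof.
  intros Hy; set (L := ln y); set (L1 := ln (y - 1)).
  assert (HL1 : 2 < L1) by (eapply Rlt_le_trans; [apply ln_10_gt_2 | apply ln_le_mono; lra]).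
  assert (HL1L : L1 <= L) by (apply ln_le_mono; lra).
  assert (Hgap : 1 / y <= L - L1).
  { pose proof (ln_increment_le y (y - 1) ltac:(lra) ltac:(lra)) as H; fold L L1 in H.
    replace ((y - 1 - y) / y) with (- (1 / y)) in H by (field; lra); lra. }
  replace (2 / L1 - 2 / L) with (2 * (L - L1) / (L1 * L)) by (field; lra).
  replace (2 / (y * L ^ 2)) with (2 * (1 / y) / (L * L)) by (field; lra).
  unfold Rdiv; apply Rmult_le_compat; try lra.
  - assert (0 < 1 / y) by (apply Rdiv_lt_0_compat; lra); lra.
  - left; apply Rinv_0_lt_compat; nra.
  - apply Rinv_le_contravar; nra.
Qed.

(* For s >= 1 and i >= 11: m(i)^(-s) <= 1/m(i) <= 2/(i (ln i)^2), a telescoping term. *)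
Lemma index_term_le_telescope s i :
  1 <= s -> (11 <= i)%nat ->
  power_weight s (index_nat i) <= 2 / ln (INR i - 1) - 2 / ln (INR (S i) - 1).
Proof.
  intros Hs Hi.
  assert (Hy : 11 <= INR i) by (apply le_INR in Hi; simpl in Hi; lra).
  rewrite S_INR; replace (INR i + 1 - 1) with (INR i) by ring.
  destruct (index_nat_bounds i ltac:(lia)) as [Hm1 Hm2].
  pose proof (index_real_ge i ltac:(lia)) as Hx.
  unfold power_weight, index_real in *.
  eapply Rle_trans; [apply Rpower_neg_le_inv; lra|].
  eapply Rle_trans; [|apply inv_xlog2_le_telescope; lra].
  (* with X = i (ln i)^2 >= 11: index_nat i > X - 1 >= X / 2 *)
  clear Hm2; revert Hm1 Hx; generalize (INR i * ln (INR i) ^ 2) as X; intros X Hm1 Hx.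
  replace (2 / X) with (/ (X / 2)) by (field; lra).
  apply Rinv_le_contravar; lra.
Qed.

Lemma index_series_bound s N :
  1 <= s -> lsum (map (power_weight s) (alphabet 11 N)) <= 2 / ln 10.
Proof.
  intros Hs; unfold alphabet; rewrite map_map.
  eapply Rle_trans.
  { apply lsum_le_pointwise; intros i Hi; apply in_seq in Hi.
    apply index_term_le_telescope; [assumption | lia]. }
  rewrite (lsum_telescope (fun i => 2 / ln (INR i - 1))).
  replace (INR 11 - 1) with 10 by (simpl; lra).
  assert (Hy : 11 <= INR (11 + N)) by (replace 11 with (INR 11) by (simpl; lra); apply le_INR; lia).
  assert (H2 : 2 < ln (INR (11 + N) - 1))
    by (eapply Rlt_le_trans; [apply ln_10_gt_2 | apply ln_le_mono; lra]).
  assert (0 < 2 / ln (INR (11 + N) - 1)) by (apply Rdiv_lt_0_compat; lra); lra.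
Qed.

(* For s >= 1 every finite sum of weights over I = index_set 11 is below 2 / ln 10:
   a finite set of letters is contained in an initial alphabet. *)
Lemma finite_sums_bounded s x :
  1 <= s -> finite_sums (index_set 11) (power_weight s) x -> x <= 2 / ln 10.
Proof.
  intros Hs [F [HnF [HF ->]]].
  eapply Rle_trans; [|apply (index_series_bound s (S (list_max F)) Hs)].
  apply lsum_incl; [exact HnF| |intros; left; apply power_weight_pos].
  intros j Hj; rewrite Forall_forall in HF.
  destruct (proj1 (index_set_iff 11 j ltac:(lia)) (HF j Hj)) as [i [Hi ->]].
  assert (Hmax : (index_nat i <= list_max F)%nat).
  { pose proof (proj1 (list_max_le F _) (Nat.le_refl _)) as Hall.
    rewrite Forall_forall in Hall; exact (Hall _ Hj). }
  pose proof (index_nat_ge i ltac:(lia)).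
  apply in_map, in_seq; lia.
Qed.

Lemma finite_sums_lub_lt_1 s :
  1 <= s -> exists S, 0 < S < 1 /\ is_lub (finite_sums (index_set 11) (power_weight s)) S.
Proof.
  intros Hs.
  assert (Hmem : finite_sums (index_set 11) (power_weight s) (lsum (map (power_weight s) (alphabet 11 1))))
    by (exists (alphabet 11 1); repeat split; [apply NoDup_alphabet | apply alphabet_in_index_set]; lia).
  assert (Hbound : bound (finite_sums (index_set 11) (power_weight s)))
    by (exists (2 / ln 10); intros x Hx; apply (finite_sums_bounded s x Hs Hx)).
  destruct (completeness _ Hbound (ex_intro _ _ Hmem)) as [S [Hub Hleast]].
  exists S; split; [split|split; assumption].
  - eapply Rlt_le_trans; [|apply Hub, Hmem]; simpl; unfold lsum; simpl.
    pose proof (power_weight_pos s (index_nat 11)); lra.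
  - assert (HS : S <= 2 / ln 10) by (apply Hleast; intros x Hx; exact (finite_sums_bounded s x Hs Hx)).
    assert (2 / ln 10 < 1); [|lra].
    pose proof ln_10_gt_2; apply (Rmult_lt_reg_r (ln 10)); [lra|].
    unfold Rdiv; rewrite Rmult_assoc, Rinv_l by lra; lra.
Qed.

(* ln index_nat(i) <= ln i + 2 ln(ln i) <= ln i + 4 sqrt(ln i). *)
Lemma ln_index_nat_le i :
  (3 <= i)%nat -> ln (INR (index_nat i)) <= ln (INR i) + 4 * sqrt (ln (INR i)).
Proof.
  intros Hi; destruct (index_nat_bounds i Hi) as [_ Hm]; unfold index_real in Hm.
  assert (Hi3 : 3 <= INR i) by (apply le_INR in Hi; simpl in Hi; lra).
  pose proof (ln_ge_1 _ Hi3) as HL.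
  assert (Hm1 : 1 <= INR (index_nat i))
    by (pose proof (index_nat_ge i Hi) as H; apply le_INR in H; lra).
  eapply Rle_trans; [apply ln_le_mono; [lra | exact Hm]|].
  rewrite ln_mult, ln_pow by (try apply pow_lt; lra).
  pose proof (ln_le_2sqrt (ln (INR i)) ltac:(lra)); simpl INR; lra.
Qed.

Lemma index_term_ge_harmonic s :
  0 <= s < 1 -> exists N1, (11 <= N1)%nat /\
    forall i, (N1 <= i)%nat -> / INR i <= power_weight s (index_nat i).
Proof.
  intros Hs; set (C := 4 * s / (1 - s)).
  assert (HC : 0 <= C) by (unfold C, Rdiv; apply Rmult_le_pos; [lra | left; apply Rinv_0_lt_compat; lra]).
  destruct (nat_above (exp (C ^ 2))) as [N HN].
  exists (max 11 N); split; [lia|]; intros i Hi.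
  assert (Hi11 : 11 <= INR i) by (replace 11 with (INR 11) by (simpl; lra); apply le_INR; lia).
  pose proof (ln_ge_1 (INR i) ltac:(lra)) as HL.
  assert (HCL : C ^ 2 <= ln (INR i)).
  { rewrite <- (ln_exp (C ^ 2)); apply ln_le_mono; [apply exp_pos|].
    assert (INR N <= INR i) by (apply le_INR; lia); lra. }
  (* with u = sqrt(ln i) >= C we get s (ln i + 4 u) <= ln i *)
  set (u := sqrt (ln (INR i))).
  assert (Hu2 : u * u = ln (INR i)) by (apply sqrt_sqrt; lra).
  assert (Hu0 : 0 <= u) by apply sqrt_pos.
  assert (HCu : C <= u) by (rewrite <- (sqrt_pow2 C) by lra; apply sqrt_le_1_alt; lra).
  assert (H4 : 4 * s <= (1 - s) * u).
  { replace (4 * s) with ((1 - s) * C) by (unfold C; field; lra).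
    apply Rmult_le_compat_l; lra. }
  assert (Hkey : s * (ln (INR i) + 4 * u) <= ln (INR i)) by nra.
  pose proof (ln_index_nat_le i ltac:(lia)) as Hlnm; fold u in Hlnm.
  unfold power_weight, Rpower; rewrite <- (exp_ln (INR i)) at 1 by lra.
  rewrite <- exp_Ropp; apply exp_le_mono; nra.
Qed.

Lemma harmonic_sum_ge a N :
  (1 <= a)%nat -> ln (INR (a + N)) - ln (INR a) <= lsum (map (fun i => / INR i) (seq a N)).
Proof.
  intros Ha.
  replace (ln (INR (a + N)) - ln (INR a))
    with (lsum (map (fun i => - ln (INR i) - - ln (INR (S i))) (seq a N)))
    by (rewrite (lsum_telescope (fun i => - ln (INR i))); ring).
  apply lsum_le_pointwise; intros i Hi; apply in_seq in Hi.
  assert (Hi1 : 1 <= INR i) by (replace 1 with (INR 1) by reflexivity; apply le_INR; lia).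
  pose proof (ln_increment_le (INR i) (INR (S i)) ltac:(lra) ltac:(rewrite S_INR; lra)) as H.
  rewrite S_INR in *; replace ((INR i + 1 - INR i) / INR i) with (/ INR i) in H by (field; lra).
  lra.
Qed.

Lemma finite_sums_unbounded s :
  0 <= s < 1 -> ~ bound (finite_sums (index_set 11) (power_weight s)).
Proof.
  intros Hs [b Hb].
  destruct (index_term_ge_harmonic s Hs) as [N1 [HN1 Hterm]].
  assert (HN1r : 11 <= INR N1) by (replace 11 with (INR 11) by (simpl; lra); apply le_INR; lia).
  destruct (nat_above (exp (b + ln (INR N1)))) as [N HN].
  assert (Hmem : finite_sums (index_set 11) (power_weight s) (lsum (map (power_weight s) (alphabet N1 N))))
    by (exists (alphabet N1 N); repeat split; [apply NoDup_alphabet | apply alphabet_in_index_set]; lia).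
  specialize (Hb _ Hmem); unfold alphabet in Hb; rewrite map_map in Hb.
  assert (Hharm : ln (INR (N1 + N)) - ln (INR N1) <= lsum (map (fun i => power_weight s (index_nat i)) (seq N1 N))).
  { eapply Rle_trans; [apply harmonic_sum_ge; lia|].
    apply lsum_le_pointwise; intros i Hi; apply in_seq in Hi; apply Hterm; lia. }
  assert (Hbig : b + ln (INR N1) < ln (INR (N1 + N))).
  { rewrite <- (ln_exp (b + ln (INR N1))); apply ln_increasing; [apply exp_pos|].
    rewrite plus_INR; pose proof (pos_INR N1); lra. }
  lra.
Qed.

Lemma geometric_pressure I A t r :
  0 < r -> (forall k, (1 <= k)%nat -> Zsum_finite I A t k (r ^ k)) -> pressure_is I A t (ln r).
Proof.
  intros Hr HZ; exists (fun k => r ^ k); split; [exact HZ|].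
  intros eps Heps; exists 0%nat; intros n _; unfold R_dist.
  rewrite ln_pow by lra.
  replace (INR (S n) * ln r / INR (S n) - ln r) with 0 by (field; apply not_0_INR; lia).
  rewrite Rabs_R0; lra.
Qed.

Lemma pressure_value_unique I A t r L :
  0 < r -> (forall k, (1 <= k)%nat -> Zsum_finite I A t k (r ^ k)) ->
  pressure_is I A t L -> L = ln r.
Proof.
  intros Hr HZ [Z [HZ' Hcv]]; destruct (geometric_pressure I A t r Hr HZ) as [Z'' [HZ'' Hcv'']].
  apply (UL_sequence _ _ _ Hcv); intros eps Heps.
  destruct (Hcv'' eps Heps) as [N HN]; exists N; intros n Hn.
  rewrite (is_lub_u _ _ _ (HZ' (S n) ltac:(lia)) (HZ'' (S n) ltac:(lia))); apply HN, Hn.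
Qed.

Lemma no_pressure_of_infinite I A t L : Zsum_infinite I A t 1 -> ~ pressure_is I A t L.
Proof. intros Hinf [Z [HZ _]]; apply Hinf; exists (Z 1%nat); apply (HZ 1%nat (le_n 1)). Qed.

Lemma phi_on_index_set t w :
  Forall (index_set 11) w -> phi A_diag t w = word_weight (power_weight (sv_exponent t)) w.
Proof. intros Hw; apply phi_A_diag, (index_set_letters_pos 11); [lia | exact Hw]. Qed.

Lemma Zsum_infinite_below t k :
  0 <= t < 3/2 -> (1 <= k)%nat -> Zsum_infinite (index_set 11) A_diag t k.
Proof.
  intros Ht; apply (Zsum_infinite_of_unbounded _ _ _ (power_weight (sv_exponent t))).
  - intros w Hw; apply phi_on_index_set, Hw.
  - apply finite_sums_unbounded, sv_exponent_lt_1, Ht.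
Qed.

Lemma Zsum_geometric_above t :
  3/2 <= t -> exists S, 0 < S < 1 /\ forall k, Zsum_finite (index_set 11) A_diag t k (S ^ k).
Proof.
  intros Ht; destruct (finite_sums_lub_lt_1 _ (sv_exponent_ge_1 t Ht)) as [S [HS Hlub]].
  exists S; split; [exact HS|]; intros k.
  apply (Zsum_finite_of_lub _ _ _ (power_weight (sv_exponent t))); [| | exact Hlub].
  - intros j _; left; apply power_weight_pos.
  - intros w Hw; apply phi_on_index_set, Hw.
Qed.

Theorem mainTheorem9 :
  exists n0 : nat,
    (forall t : R, 0 <= t < 3/2 -> pressure_infinite (index_set n0) A_diag t) /\
    (forall t : R, 3/2 <= t -> exists L : R, L < 0 /\ pressure_is (index_set n0) A_diag t L) /\
    (forall t : R, 0 <= t -> ~ pressure_is (index_set n0) A_diag t 0).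
Proof.
  exists 11%nat; split; [|split].
  - intros t Ht M; exists 1%nat; intros k _ Hk; left; apply Zsum_infinite_below; assumption.
  - intros t Ht; destruct (Zsum_geometric_above t Ht) as [S [HS HZ]].
    exists (ln S); split; [rewrite <- ln_1; apply ln_increasing; lra|].
    apply geometric_pressure; [lra | intros k _; apply HZ].
  - intros t Ht Hp; destruct (Rlt_le_dec t (3/2)) as [Hlt|Hge].
    + exact (no_pressure_of_infinite _ _ _ _ (Zsum_infinite_below t 1 (conj Ht Hlt) (le_n 1)) Hp).
    + destruct (Zsum_geometric_above t Hge) as [S [HS HZ]].
      assert (Hln : ln S < 0) by (rewrite <- ln_1; apply ln_increasing; lra).
      pose proof (pressure_value_unique _ _ _ S 0 ltac:(lra) (fun k _ => HZ k) Hp); lra.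
Qed.
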